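(* Let $\Pi=(\iota,\tau,\beta)$ be a safety problem over a vocabulary $\Sigma$, let $\varphi(x)$ be a formula over $\Sigma$ with free variable $x$, and let $w$ be a fresh constant symbol not in $\Sigma$. Let $\xi$ be a soundness invariant for $\varphi(w)$ (a closed formula over $\Sigma\cup\{m\}$) and let $\psi$ be a safe inductive invariant of $\Pi^w_\varphi$ (a closed formula over $\Sigma\cup\{w\}$). Then $\xi[\psi/m]$, which is a closed formula over $\Sigma$, is a safe inductive invariant of $\Pi$.
   Context: A first-order vocabulary $\Sigma$ consists of constant, function and relation symbols; $\Sigma'=\{a' : a\in\Sigma\}$ is a disjoint copy, and for a formula $\varphi$, $\varphi'$ denotes $\varphi$ with every vocabulary symbol replaced by its primed copy. A safety problem over $\Sigma$ is a triple $(\iota,\tau,\beta)$, where $\iota,\beta$ are closed formulas over $\Sigma$ and $\tau$ is a closed formula over $\Sigma\uplus\Sigma'$. $A\Rightarrow B$ means the implication $A\to B$ is valid. A closed formula $\chi$ is a safe inductive invariant of $(\iota,\tau,\beta)$ if $\iota\Rightarrow\chi$, $\chi\wedge\tau\Rightarrow\chi'$ and $\chi\Rightarrow\neg\beta$. $\varphi(w)$ is $\varphi$ with $x$ replaced by $w$. The safety problem $\Pi^w_\varphi$ over $\Sigma\cup\{w\}$ is $\big(\iota\wedge\varphi(w),\ \varphi(w)\wedge\tau\wedge w'=w\wedge(\varphi(w))',\ \beta\wedge\varphi(w)\big)$. With $m$ a fresh unary relation symbol, the safety problem $\Pi^{\mathrm{sound}}_\varphi$ over $\Sigma\cup\{m\}$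 is $\big(\iota\wedge\forall x.\,\varphi(x)\to m(x),\ \tau\wedge\forall x.\,(m(x)\wedge\varphi(x)\wedge\varphi'(x))\to m'(x),\ \beta\wedge\forall x.\,\varphi(x)\to\neg m(x)\big)$; a soundness invariant for $\varphi(w)$ is a safe inductive invariant of $\Pi^{\mathrm{sound}}_\varphi$. $\xi[\psi/m]$ denotes the formula obtained from $\xi$ by replacing every atom $m(t)$, for any term $t$, with $\psi[t/w]$ ($\psi$ with $w$ replaced by $t$), where bound variables of $\xi$ and $\psi$ are assumed distinct. *)

From mathcomp Require Import all_boot.

Set Implicit Arguments.
Unset Strict Implicit.
Unset Printing Implicit Defensive.

(* Vocabularies.  Constant symbols are function symbols of arity 0.    *)

Record funsig := FunSig { fsym : Type; far : fsym -> nat }.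
Record vocab := Vocab { funs : funsig; rsym : Type; rar : rsym -> nat }.

Inductive term (F : funsig) : Type :=
| tvar : nat -> term F
| tapp : forall f : fsym F, ('I_(far f) -> term F) -> term F.

(* First-order formulas with equality, de Bruijn binders. *)
Inductive formula (S : vocab) : Type :=
| fbot : formula S
| fequ : term (funs S) -> term (funs S) -> formula S
| frel : forall r : rsym S, ('I_(rar r) -> term (funs S)) -> formula S
| fnot : formula S -> formula S
| fand : formula S -> formula S -> formula S
| forr : formula S -> formula S -> formula S
| fimp : formula S -> formula S -> formula S
| fall : formula S -> formula S
| fex  : formula S -> formula S.

Arguments tvar {F}.
Arguments fbot {S}.
Arguments tapp {F} f _.
Arguments frel {S} r _.
Arguments fequ {S} _ _.

Fixpoint tbound F (n : nat) (t : term F) : Prop :=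
  match t with
  | tvar i => i < n
  | tapp f args => forall i, tbound n (args i)
  end.

Fixpoint fbound S (n : nat) (a : formula S) : Prop :=
  match a with
  | fbot => True
  | fequ t1 t2 => tbound n t1 /\ tbound n t2
  | frel r args => forall i, tbound n (args i)
  | fnot b => fbound n b
  | fand b c | forr b c | fimp b c => fbound n b /\ fbound n c
  | fall b | fex b => fbound n.+1 b
  end.

Definition closed S (a : formula S) : Prop := fbound 0 a.

Record structure (S : vocab) := mkStructure {
  dom : Type;
  dom_pt : dom;
  ifun : forall f : fsym (funs S), ('I_(far f) -> dom) -> dom;
  irel : forall r : rsym S, ('I_(rar r) -> dom) -> Prop }.

Definition scons (T : Type) (d : T) (e : nat -> T) : nat -> T :=
  fun n => if n is k.+1 then e k else d.

Fixpoint teval S (M : structure S) (e : nat -> dom M) (t : term (funs S)) : dom M :=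
  match t with
  | tvar i => e i
  | tapp f args => @ifun S M f (fun i => @teval S M e (args i))
  end.

Fixpoint sat S (M : structure S) (e : nat -> dom M) (a : formula S) : Prop :=
  match a with
  | fbot => False
  | fequ t1 t2 => @teval S M e t1 = @teval S M e t2
  | frel r args => @irel S M r (fun i => @teval S M e (args i))
  | fnot b => ~ @sat S M e b
  | fand b c => @sat S M e b /\ @sat S M e c
  | forr b c => @sat S M e b \/ @sat S M e c
  | fimp b c => @sat S M e b -> @sat S M e c
  | fall b => forall d : dom M, @sat S M (scons d e) b
  | fex b => exists d : dom M, @sat S M (scons d e) b
  end.

Definition valid S (a : formula S) : Prop := forall (M : structure S) (e : nat -> dom M), @sat S M e a.

Definition entails S (a b : formula S) : Prop := valid (fimp a b).

(* F extended with one fresh constant (None). *)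
Definition addc (F : funsig) : funsig :=
  @FunSig (option (fsym F)) (fun o => if o is Some f then far f else 0).
Definition vaddc (S : vocab) : vocab := @Vocab (addc (funs S)) (rsym S) (@rar S).
(* Sigma ∪ {m}, m a fresh unary relation (None) *)
Definition vaddr (S : vocab) : vocab :=
  @Vocab (funs S) (option (rsym S)) (fun o => if o is Some r then rar r else 1).
(* Sigma ⊎ Sigma' : inl = unprimed symbols, inr = primed copies *)
Definition vdouble (S : vocab) : vocab :=
  @Vocab (@FunSig (fsym (funs S) + fsym (funs S))
                  (fun s => match s with inl f => far f | inr f => far f end))
         (rsym S + rsym S)
         (fun s => match s with inl r => rar r | inr r => rar r end).

Record vmorph (A B : vocab) := VMorph {
  mf : fsym (funs A) -> fsym (funs B);
  mf_ar : forall f, far (mf f) = far f;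
  mr : rsym A -> rsym B;
  mr_ar : forall r, rar (mr r) = rar r }.

Fixpoint tren (F G : funsig) (g : fsym F -> fsym G)
    (hg : forall f, far (g f) = far f) (t : term F) : term G :=
  match t with
  | tvar i => tvar i
  | tapp f args => tapp (g f) (fun i => tren hg (args (cast_ord (hg f) i)))
  end.

Fixpoint fren (A B : vocab) (h : vmorph A B) (a : formula A) : formula B :=
  match a with
  | fbot => fbot
  | fequ t1 t2 => fequ (tren (mf_ar h) t1) (tren (mf_ar h) t2)
  | frel r args =>
      frel (mr h r) (fun i => tren (mf_ar h) (args (cast_ord (mr_ar h r) i)))
  | fnot b => fnot (fren h b)
  | fand b c => fand (fren h b) (fren h c)
  | forr b c => forr (fren h b) (fren h c)
  | fimp b c => fimp (fren h b) (fren h c)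
  | fall b => fall (fren h b)
  | fex b => fex (fren h b)
  end.

Definition incl_c (S : vocab) : vmorph S (vaddc S) :=
  @VMorph S (vaddc S) (@Some _) (fun _ => erefl) id (fun _ => erefl).
Definition incl_r (S : vocab) : vmorph S (vaddr S) :=
  @VMorph S (vaddr S) id (fun _ => erefl) (@Some _) (fun _ => erefl).
Definition vleft (S : vocab) : vmorph S (vdouble S) :=
  @VMorph S (vdouble S) (@inl _ _) (fun _ => erefl) (@inl _ _) (fun _ => erefl).
Definition vright (S : vocab) : vmorph S (vdouble S) :=
  @VMorph S (vdouble S) (@inr _ _) (fun _ => erefl) (@inr _ _) (fun _ => erefl).

Definition sum_map (A B : Type) (g : A -> B) (s : A + A) : B + B :=
  match s with inl a => inl (g a) | inr a => inr (g a) end.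

Lemma dc_far S (f : fsym (funs (vdouble S))) :
  far (sum_map (@Some _) f : fsym (funs (vdouble (vaddc S)))) = far f.
Proof. by case: f. Qed.
Lemma dc_rar S (r : rsym (vdouble S)) :
  rar (sum_map id r : rsym (vdouble (vaddc S))) = rar r.
Proof. by case: r. Qed.
Lemma dr_far S (f : fsym (funs (vdouble S))) :
  far (sum_map id f : fsym (funs (vdouble (vaddr S)))) = far f.
Proof. by case: f. Qed.
Lemma dr_rar S (r : rsym (vdouble S)) :
  rar (sum_map (@Some _) r : rsym (vdouble (vaddr S))) = rar r.
Proof. by case: r. Qed.

Definition dbl_c (S : vocab) : vmorph (vdouble S) (vdouble (vaddc S)) :=
  @VMorph (vdouble S) (vdouble (vaddc S)) (sum_map (@Some _)) (@dc_far S)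
          (sum_map id) (@dc_rar S).
Definition dbl_r (S : vocab) : vmorph (vdouble S) (vdouble (vaddr S)) :=
  @VMorph (vdouble S) (vdouble (vaddr S)) (sum_map id) (@dr_far S)
          (sum_map (@Some _)) (@dr_rar S).

Definition unprimed (S : vocab) (a : formula S) : formula (vdouble S) := fren (vleft S) a.
Definition prime (S : vocab) (a : formula S) : formula (vdouble S) := fren (vright S) a.

Fixpoint tsubst (F : funsig) (sigma : nat -> term F) (t : term F) : term F :=
  match t with
  | tvar i => sigma i
  | tapp f args => tapp f (fun i => tsubst sigma (args i))
  end.

Definition up (F : funsig) (sigma : nat -> term F) : nat -> term F :=
  scons (tvar 0) (fun i => tsubst (fun j => tvar j.+1) (sigma i)).

Fixpoint fsubst (S : vocab) (sigma : nat -> term (funs S)) (a : formula S) : formula S :=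
  match a with
  | fbot => fbot
  | fequ t1 t2 => fequ (tsubst sigma t1) (tsubst sigma t2)
  | frel r args => frel r (fun i => tsubst sigma (args i))
  | fnot b => fnot (fsubst sigma b)
  | fand b c => fand (fsubst sigma b) (fsubst sigma c)
  | forr b c => forr (fsubst sigma b) (fsubst sigma c)
  | fimp b c => fimp (fsubst sigma b) (fsubst sigma c)
  | fall b => fall (fsubst (up sigma) b)
  | fex b => fex (fsubst (up sigma) b)
  end.

Definition wconst (F : funsig) : term (addc F) :=
  @tapp (addc F) None (fun _ => tvar 0).

(* phi(w): phi over Sigma with free variable x (de Bruijn index 0),
   x replaced by w *)
Definition phi_w (S : vocab) (phi : formula S) : formula (vaddc S) :=
  @fsubst (vaddc S) (scons (wconst (funs S)) (fun k => tvar k)) (fren (incl_c S) phi).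

Definition tshift (F : funsig) (k : nat) (t : term F) : term F :=
  tsubst (fun i => tvar (i + k)) t.

Fixpoint tsubw (F : funsig) (k : nat) (t : term F) (s : term (addc F)) : term F :=
  match s with
  | tvar i => tvar i
  | tapp o args =>
      match o as o' return ('I_(far (o' : fsym (addc F))) -> term (addc F)) -> term F with
      | Some f => fun args' => tapp f (fun i => tsubw k t (args' i))
      | None => fun _ => tshift k t
      end args
  end.

Fixpoint fsubw (S : vocab) (k : nat) (t : term (funs S)) (a : formula (vaddc S))
    : formula S :=
  match a with
  | fbot => fbot
  | fequ t1 t2 => @fequ S (tsubw k t t1) (tsubw k t t2)
  | frel r args => @frel S r (fun i => tsubw k t (args i))
  | fnot b => fnot (fsubw k t b)
  | fand b c => fand (fsubw k t b) (fsubw k t c)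
  | forr b c => forr (fsubw k t b) (fsubw k t c)
  | fimp b c => fimp (fsubw k t b) (fsubw k t c)
  | fall b => fall (fsubw k.+1 t b)
  | fex b => fex (fsubw k.+1 t b)
  end.

Definition subst_w (S : vocab) (psi : formula (vaddc S)) (t : term (funs S)) : formula S :=
  fsubw 0 t psi.

Fixpoint subst_m (S : vocab) (psi : formula (vaddc S)) (xi : formula (vaddr S))
    : formula S :=
  match xi with
  | fbot => fbot
  | fequ t1 t2 => @fequ S t1 t2
  | frel o args =>
      match o as o' return ('I_(rar (o' : rsym (vaddr S))) -> term (funs S)) -> formula S with
      | Some r => fun args' => @frel S r args'
      | None => fun args' => subst_w psi (args' ord0)
      end args
  | fnot b => fnot (subst_m psi b)
  | fand b c => fand (subst_m psi b) (subst_m psi c)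
  | forr b c => forr (subst_m psi b) (subst_m psi c)
  | fimp b c => fimp (subst_m psi b) (subst_m psi c)
  | fall b => fall (subst_m psi b)
  | fex b => fex (subst_m psi b)
  end.

Record safety (S : vocab) := Safety {
  init : formula S; trans : formula (vdouble S); bad : formula S }.

Definition is_safety (S : vocab) (P : safety S) : Prop :=
  closed (init P) /\ closed (trans P) /\ closed (bad P).

Definition safe_inv (S : vocab) (P : safety S) (chi : formula S) : Prop :=
  [/\ closed chi,
      entails (init P) chi,
      entails (fand (unprimed chi) (trans P)) (prime chi)
    & entails chi (fnot (bad P))].

Definition Pi_w (S : vocab) (P : safety S) (phi : formula S) : safety (vaddc S) :=
  let pw := phi_w phi in
  let w0 : term (funs (vdouble (vaddc S))) := @tapp (funs (vdouble (vaddc S))) (inl None) (fun _ => tvar 0) in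
  let w1 : term (funs (vdouble (vaddc S))) := @tapp (funs (vdouble (vaddc S))) (inr None) (fun _ => tvar 0) in
  @Safety (vaddc S)
    (fand (fren (incl_c S) (init P)) pw)
    (fand (fand (fand (unprimed pw) (fren (dbl_c S) (trans P))) (fequ w1 w0)) (prime pw))
    (fand (fren (incl_c S) (bad P)) pw).

(* Pi^sound_phi over Sigma ∪ {m}; phi(x) with x = de Bruijn 0 bound by the
   quantifier *)
Definition Pi_sound (S : vocab) (P : safety S) (phi : formula S) : safety (vaddr S) :=
  let phim := fren (incl_r S) phi in
  let m0 : formula (vaddr S) := @frel (vaddr S) None (fun _ => tvar 0) in
  let ml : formula (vdouble (vaddr S)) := @frel (vdouble (vaddr S)) (inl None) (fun _ => tvar 0) in
  let mr : formula (vdouble (vaddr S)) := @frel (vdouble (vaddr S)) (inr None) (fun _ => tvar 0) in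
  @Safety (vaddr S)
    (fand (fren (incl_r S) (init P)) (fall (fimp phim m0)))
    (fand (fren (dbl_r S) (trans P))
          (fall (fimp (fand (fand ml (unprimed phim)) (prime phim)) mr)))
    (fand (fren (incl_r S) (bad P)) (fall (fimp phim (fnot m0)))).

Definition soundness_inv (S : vocab) (P : safety S) (phi : formula S)
    (xi : formula (vaddr S)) : Prop := safe_inv (Pi_sound P phi) xi.

(** Given a model M of Σ, interpret m as the set of elements d such that M
    with w := d satisfies ψ.  In this expansion an atom m(t) means exactly
    ψ[t/w], so M satisfies ξ[ψ/m] iff the expansion satisfies ξ.  Each of the
    three conditions on ξ for Π^sound then yields the corresponding condition
    on ξ[ψ/m] for Π, once its premise about m is discharged by the matching
    condition on ψ for Π^w_φ applied at w := d: initiation gives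
    ∀x. φ(x) → m(x), consecution (w' = w) gives the transfer of m to m', and
    safety gives ∀x. φ(x) → ¬m(x).  For a transition, a model of Σ ⊎ Σ' is
    split into its pre- and post-state reducts, each expanded by its own m. *)

From Pilot Require Import Defs.
From mathcomp Require Import all_boot.
From Stdlib Require Import Setoid FunctionalExtensionality.

Set Implicit Arguments.
Unset Strict Implicit.
Unset Printing Implicit Defensive.

Lemma comp_cast_ord_id T n (eq_n : n = n) (g : 'I_n -> T) :
  (fun i => g (cast_ord eq_n i)) = g.
Proof. by apply: functional_extensionality => i; rewrite cast_ord_id. Qed.

Lemma irel_ext S (M : structure S) r (args args' : 'I_(rar r) -> dom M) :
  args =1 args' -> @irel S M r args <-> @irel S M r args'.
Proof. by move/functional_extensionality ->. Qed.

Lemma teval_ext A (M : structure A) pt fM rM e t :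
  (forall f args, fM f args = @ifun A M f args) ->
  @teval A (@mkStructure A (dom M) pt fM rM) e t = @teval A M e t.
Proof.
move=> Hf; elim: t => [i|f args IH] //=; rewrite Hf.
by congr (ifun _); apply: functional_extensionality.
Qed.

Lemma sat_ext A (M : structure A) pt fM rM e a :
  (forall f args, fM f args = @ifun A M f args) ->
  (forall r args, rM r args <-> @irel A M r args) ->
  @sat A (@mkStructure A (dom M) pt fM rM) e a <-> @sat A M e a.
Proof.
move=> Hf Hr.
elim: a e => [|t1 t2|r args|b IHb|b IHb c IHc|b IHb c IHc|b IHb c IHc|b IHb|b IHb] e /=;
  try by setoid_rewrite IHb; try setoid_rewrite IHc.
- by [].
- by rewrite !teval_ext.
- by rewrite Hr; apply: irel_ext => i; apply: teval_ext.
Qed.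

Definition reduct A B (h : vmorph A B) (N : structure B) : structure A :=
  @mkStructure A (dom N) (dom_pt N)
    (fun f args => @ifun B N (mf h f) (fun i => args (cast_ord (mf_ar h f) i)))
    (fun r args => @irel B N (mr h r) (fun i => args (cast_ord (mr_ar h r) i))).

Lemma teval_fren A B (h : vmorph A B) (N : structure B) e t :
  @teval B N e (tren (mf_ar h) t) = @teval A (reduct h N) e t.
Proof.
elim: t => [i|f args IH] //=.
by congr (ifun _); apply: functional_extensionality => i; apply: IH.
Qed.

Lemma sat_fren A B (h : vmorph A B) (N : structure B) e a :
  @sat B N e (fren h a) <-> @sat A (reduct h N) e a.
Proof.
elim: a e => [|t1 t2|r args|b IHb|b IHb c IHc|b IHb c IHc|b IHb c IHc|b IHb|b IHb] e /=;
  try by setoid_rewrite IHb; try setoid_rewrite IHc.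
- by [].
- by rewrite !teval_fren.
- by apply: irel_ext => i; apply: teval_fren.
Qed.

Lemma teval_subst S (M : structure S) e sigma t :
  @teval S M e (tsubst sigma t) = @teval S M (fun i => @teval S M e (sigma i)) t.
Proof.
elim: t => [i|f args IH] //=.
by congr (ifun _); apply: functional_extensionality => i; apply: IH.
Qed.

Lemma teval_up S (M : structure S) e d (sigma : nat -> term (funs S)) :
  (fun i => @teval S M (scons d e) (up sigma i))
  = scons d (fun i => @teval S M e (sigma i)).
Proof. by apply: functional_extensionality => -[|i] //=; rewrite teval_subst. Qed.

Lemma sat_subst S (M : structure S) e sigma a :
  @sat S M e (fsubst sigma a) <-> @sat S M (fun i => @teval S M e (sigma i)) a.
Proof.
elim: a e sigma => [|t1 t2|r args|b IHb|b IHb c IHc|b IHb c IHc|b IHb c IHc|b IHb|b IHb] e sigma /=;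
  try by setoid_rewrite IHb; try setoid_rewrite IHc; try setoid_rewrite teval_up.
- by [].
- by rewrite !teval_subst.
- by apply: irel_ext => i; apply: teval_subst.
Qed.

Lemma teval_bound S (M : structure S) n e e' t :
  tbound n t -> {in gtn n, e =1 e'} -> @teval S M e t = @teval S M e' t.
Proof.
move=> + He; elim: t => [i|f args IH] /= Ht; first exact: He.
by congr (ifun _); apply: functional_extensionality => i; apply: IH.
Qed.

Lemma sat_bound S (M : structure S) n e e' a :
  fbound n a -> {in gtn n, e =1 e'} -> @sat S M e a <-> @sat S M e' a.
Proof.
elim: a n e e' => [|t1 t2|r args|b IHb|b IHb c IHc|b IHb c IHc|b IHb c IHc|b IHb|b IHb]
  n e e' /= Ha He; try by case: Ha => Hb Hc; rewrite (IHb n e e') // (IHc n e e').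
- by [].
- by case: Ha => Ht1 Ht2; rewrite (teval_bound Ht1 He) (teval_bound Ht2 He).
- by apply: irel_ext => i; apply: teval_bound (Ha i) He.
- by rewrite (IHb n e e').
all: have He' d : {in gtn n.+1, scons d e =1 scons d e'} by case=> //= i /He.
all: by setoid_rewrite (fun d => IHb n.+1 (scons d e) (scons d e') Ha (He' d)).
Qed.

Lemma sat_closed S (M : structure S) {e e'} a :
  Defs.closed a -> @sat S M e a <-> @sat S M e' a.
Proof. by move=> Ha; apply: sat_bound Ha _. Qed.

Lemma sat_bound1 S (M : structure S) {d e e'} a :
  fbound 1 a -> @sat S M (scons d e) a <-> @sat S M (scons d e') a.
Proof. by move=> Ha; apply: sat_bound Ha _; case. Qed.

Definition expand_c S (M : structure S) (d : dom M) : structure (vaddc S) :=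
  @mkStructure (vaddc S) (dom M) (dom_pt M)
    (fun o => if o is Some f
                return ('I_(far (o : Defs.fsym (funs (vaddc S)))) -> dom M) -> dom M
              then @ifun S M f else fun=> d)
    (@irel S M).

Definition expand_r S (M : structure S) (P : dom M -> Prop) : structure (vaddr S) :=
  @mkStructure (vaddr S) (dom M) (dom_pt M) (@ifun S M)
    (fun o => if o is Some r
                return ('I_(rar (o : rsym (vaddr S))) -> dom M) -> Prop
              then @irel S M r else fun args => P (args ord0)).

Arguments expand_c {S} M d.
Arguments expand_r {S} M P.

(* Offsets are written [k + i] rather than [i + k] so that passing under a
   binder, [scons d e (k.+1 + i) = e (k + i)], holds by computation. *)
Lemma teval_tsubw S (M : structure S) k t e s :
  @teval S M e (tsubw k t s)
  = @teval _ (expand_c M (@teval S M (fun i => e (k + i)) t)) e s.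
Proof.
elim: s => [i|[f|] args IH] //=.
- by congr (ifun _); apply: functional_extensionality => i; apply: IH.
- rewrite teval_subst; congr teval.
  by apply: functional_extensionality => i; rewrite addnC.
Qed.

Lemma sat_fsubw S (M : structure S) k t e a :
  @sat S M e (fsubw k t a)
  <-> @sat _ (expand_c M (@teval S M (fun i => e (k + i)) t)) e a.
Proof.
elim: a k e => [|t1 t2|r args|b IHb|b IHb c IHc|b IHb c IHc|b IHb c IHc|b IHb|b IHb] k e /=;
  try by setoid_rewrite IHb; try setoid_rewrite IHc.
- by [].
- by rewrite !teval_tsubw.
- by apply: irel_ext => i; apply: teval_tsubw.
Qed.

Lemma teval_expand_r S (M : structure S) P e t :
  @teval _ (expand_r M P) e t = @teval S M e t.
Proof.
elim: t => [i|f args IH] //=.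
by congr (ifun _); apply: functional_extensionality => i; apply: IH.
Qed.

Lemma sat_subst_m S (M : structure S) psi xi e (e0 : nat -> dom M) :
  Defs.closed psi ->
  @sat S M e (subst_m psi xi)
  <-> @sat _ (expand_r M (fun d => @sat _ (expand_c M d) e0 psi)) e xi.
Proof.
move=> Cpsi.
elim: xi e => [|t1 t2|[r|] args|b IHb|b IHb c IHc|b IHb c IHc|b IHb c IHc|b IHb|b IHb] e /=;
  try by setoid_rewrite IHb; try setoid_rewrite IHc.
- by [].
- by rewrite !teval_expand_r.
- by apply: irel_ext => i; rewrite teval_expand_r.
- by rewrite teval_expand_r /subst_w sat_fsubw; apply: sat_closed.
Qed.

Lemma tbound_tshift F n k (t : term F) : tbound n t -> tbound (k + n) (tshift k t).
Proof.
elim: t => [i|f args IH] /= Ht; last by move=> i; apply: IH.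
by rewrite addnC ltn_add2l.
Qed.

Lemma tbound_tsubw F k n (t : term F) s :
  tbound k s -> tbound n t -> tbound (k + n) (tsubw k t s).
Proof.
move=> + Ht; elim: s => [i /= /ltn_addr //|[f|] args IH /=] Hs; last exact: tbound_tshift.
by move=> i; apply: IH.
Qed.

Lemma fbound_fsubw S k n t (a : formula (vaddc S)) :
  fbound k a -> tbound n t -> fbound (k + n) (fsubw k t a).
Proof.
move=> + Ht; elim: a k => [|t1 t2|r args|b IHb|b IHb c IHc|b IHb c IHc|b IHb c IHc|b IHb|b IHb] k /=;
  do ?[case=> Hb Hc; split; [exact: IHb | exact: IHc]].
- by [].
- by case=> ??; split; apply: tbound_tsubw.
- by move=> Hargs i; apply: tbound_tsubw.
- exact: IHb.
- by rewrite -addSn; apply: IHb.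
- by rewrite -addSn; apply: IHb.
Qed.

Lemma fbound_subst_m S psi (xi : formula (vaddr S)) n :
  Defs.closed psi -> fbound n xi -> fbound n (subst_m psi xi).
Proof.
move=> Cpsi; elim: xi n => [|t1 t2|[r|] args|b IHb|b IHb c IHc|b IHb c IHc|b IHb c IHc|b IHb|b IHb] n //=;
  do ?[case=> Hb Hc; split; [exact: IHb | exact: IHc]].
- by move=> Hargs; rewrite -(add0n n); apply: fbound_fsubw.
- exact: IHb.
- exact: IHb.
- exact: IHb.
Qed.

Lemma sat_fren_agree A B (h : vmorph A B) (M : structure A) pt fN rN e a :
  (forall f args,
     fN (mf h f) (fun i => args (cast_ord (mf_ar h f) i)) = @ifun A M f args) ->
  (forall r args,
     rN (mr h r) (fun i => args (cast_ord (mr_ar h r) i)) <-> @irel A M r args) ->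
  @sat B (@mkStructure B (dom M) pt fN rN) e (fren h a) <-> @sat A M e a.
Proof. by move=> Hf Hr; rewrite sat_fren; apply: sat_ext. Qed.

Definition expand2_c S (N : structure (vdouble S)) (d : dom N)
    : structure (vdouble (vaddc S)) :=
  @mkStructure (vdouble (vaddc S)) (dom N) (dom_pt N)
    (fun s => match s as s'
       return ('I_(far (s' : Defs.fsym (funs (vdouble (vaddc S))))) -> dom N) -> dom N with
     | inl (Some f) => @ifun _ N (inl f)
     | inr (Some f) => @ifun _ N (inr f)
     | _ => fun=> d
     end)
    (@irel _ N).

Definition expand2_r S (N : structure (vdouble S)) (P0 P1 : dom N -> Prop)
    : structure (vdouble (vaddr S)) :=
  @mkStructure (vdouble (vaddr S)) (dom N) (dom_pt N) (@ifun _ N)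
    (fun s => match s as s'
       return ('I_(rar (s' : rsym (vdouble (vaddr S)))) -> dom N) -> Prop with
     | inl (Some r) => @irel _ N (inl r)
     | inr (Some r) => @irel _ N (inr r)
     | inl None => fun args => P0 (args ord0)
     | inr None => fun args => P1 (args ord0)
     end).

Arguments expand2_c {S} N d.
Arguments expand2_r {S} N P0 P1.

Lemma sat_expand_c_incl S (M : structure S) d e a :
  @sat _ (expand_c M d) e (fren (incl_c S) a) <-> @sat S M e a.
Proof. by apply: sat_fren_agree => [f|r] args; rewrite comp_cast_ord_id. Qed.

Lemma sat_expand_r_incl S (M : structure S) P e a :
  @sat _ (expand_r M P) e (fren (incl_r S) a) <-> @sat S M e a.
Proof. by apply: sat_fren_agree => [f|r] args; rewrite comp_cast_ord_id. Qed.

Lemma sat_expand2_c_dbl S (N : structure (vdouble S)) d e a :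
  @sat _ (expand2_c N d) e (fren (dbl_c S) a) <-> @sat _ N e a.
Proof. by apply: sat_fren_agree => [[f|f]|[r|r]] args; rewrite comp_cast_ord_id. Qed.

Lemma sat_expand2_r_dbl S (N : structure (vdouble S)) P0 P1 e a :
  @sat _ (expand2_r N P0 P1) e (fren (dbl_r S) a) <-> @sat _ N e a.
Proof. by apply: sat_fren_agree => [[f|f]|[r|r]] args; rewrite comp_cast_ord_id. Qed.

Lemma sat_expand2_c_left S (N : structure (vdouble S)) d e a :
  @sat _ (expand2_c N d) e (unprimed a)
  <-> @sat _ (expand_c (reduct (vleft S) N) d) e a.
Proof.
by apply: (@sat_fren_agree _ _ _ (expand_c (reduct (vleft S) N) d))
  => [[f|]|r] args //=; rewrite comp_cast_ord_id.
Qed.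

Lemma sat_expand2_c_right S (N : structure (vdouble S)) d e a :
  @sat _ (expand2_c N d) e (Defs.prime a)
  <-> @sat _ (expand_c (reduct (vright S) N) d) e a.
Proof.
by apply: (@sat_fren_agree _ _ _ (expand_c (reduct (vright S) N) d))
  => [[f|]|r] args //=; rewrite comp_cast_ord_id.
Qed.

Lemma sat_expand2_r_left S (N : structure (vdouble S)) P0 P1 e a :
  @sat _ (expand2_r N P0 P1) e (unprimed a)
  <-> @sat _ (expand_r (reduct (vleft S) N) P0) e a.
Proof.
by apply: (@sat_fren_agree _ _ _ (expand_r (reduct (vleft S) N) P0))
  => [f|[r|]] args //=; rewrite ?comp_cast_ord_id ?cast_ord_id.
Qed.

Lemma sat_expand2_r_right S (N : structure (vdouble S)) P0 P1 e a :
  @sat _ (expand2_r N P0 P1) e (Defs.prime a)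
  <-> @sat _ (expand_r (reduct (vright S) N) P1) e a.
Proof.
by apply: (@sat_fren_agree _ _ _ (expand_r (reduct (vright S) N) P1))
  => [f|[r|]] args //=; rewrite ?comp_cast_ord_id ?cast_ord_id.
Qed.

Lemma sat_phi_w S (M : structure S) d e phi :
  @sat _ (expand_c M d) e (phi_w phi) <-> @sat S M (scons d e) phi.
Proof.
rewrite /phi_w sat_subst -(sat_expand_c_incl (d := d)).
suff -> : (fun i => @teval _ (expand_c M d) e (scons (wconst _) tvar i)) = scons d e by [].
by apply: functional_extensionality => -[|i].
Qed.

Section Transfer.

Variables (S : vocab) (P : safety S) (phi : formula S).
Variables (xi : formula (vaddr S)) (psi : formula (vaddc S)).
Hypotheses (phi_bound : fbound 1 phi) (psi_closed : Defs.closed psi).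

(* Any environment would do: ψ is closed. *)
Definition psi_pred (M : structure S) : dom M -> Prop :=
  fun d => @sat _ (expand_c M d) (fun=> dom_pt M) psi.

Arguments psi_pred : clear implicits.

Lemma sat_subst_m_psi (M : structure S) e :
  @sat S M e (subst_m psi xi) <-> @sat _ (expand_r M (psi_pred M)) e xi.
Proof. exact: sat_subst_m. Qed.

Lemma entails_init_subst_m :
  Defs.closed (init P) ->
  entails (init (Pi_sound P phi)) xi -> entails (init (Pi_w P phi)) psi ->
  entails (init P) (subst_m psi xi).
Proof.
move=> init_closed xi_init psi_init M e /= HI.
apply/sat_subst_m_psi/xi_init => /=; split; first exact/sat_expand_r_incl.
move=> d /sat_expand_r_incl Hphi.
apply: psi_init => /=; split.
- by apply/sat_expand_c_incl; move/(sat_closed init_closed): HI.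
- by apply/sat_phi_w; move/(sat_bound1 phi_bound): Hphi.
Qed.

Lemma entails_trans_subst_m :
  Defs.closed (trans P) ->
  entails (fand (unprimed xi) (trans (Pi_sound P phi))) (Defs.prime xi) ->
  entails (fand (unprimed psi) (trans (Pi_w P phi))) (Defs.prime psi) ->
  entails (fand (unprimed (subst_m psi xi)) (trans P)) (Defs.prime (subst_m psi xi)).
Proof.
move=> trans_closed xi_trans psi_trans N e /= [/sat_fren/sat_subst_m_psi Hxi HT].
apply/sat_fren/sat_subst_m_psi.
apply/(sat_expand2_r_right (P0 := psi_pred (reduct (vleft S) N))).
apply: xi_trans => /=; split; first exact/sat_expand2_r_left.
split; first exact/sat_expand2_r_dbl.
move=> d /= [[Hpsi /sat_expand2_r_left/sat_expand_r_incl Hphi]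
  /sat_expand2_r_right/sat_expand_r_incl Hphi'].
apply/(sat_expand2_c_right (d := d)).
apply: psi_trans => /=; split; first exact/sat_expand2_c_left.
split; last by apply/sat_expand2_c_right/sat_phi_w; move/(sat_bound1 phi_bound): Hphi'.
split; last by [].
split; first by apply/sat_expand2_c_left/sat_phi_w; move/(sat_bound1 phi_bound): Hphi.
by apply/sat_expand2_c_dbl; move/(sat_closed trans_closed): HT.
Qed.

Lemma entails_safe_subst_m :
  Defs.closed (bad P) ->
  entails xi (fnot (bad (Pi_sound P phi))) -> entails psi (fnot (bad (Pi_w P phi))) ->
  entails (subst_m psi xi) (fnot (bad P)).
Proof.
move=> bad_closed xi_safe psi_safe M e /= /sat_subst_m_psi Hxi HB.
apply: (xi_safe _ _ Hxi) => /=; split; first exact/sat_expand_r_incl.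
move=> d /sat_expand_r_incl Hphi Hm.
apply: (psi_safe _ _ Hm) => /=; split.
- by apply/sat_expand_c_incl; move/(sat_closed bad_closed): HB.
- by apply/sat_phi_w; move/(sat_bound1 phi_bound): Hphi.
Qed.

End Transfer.

Theorem lemmaA1 (S : vocab) (P : safety S) (phi : formula S)
    (xi : formula (vaddr S)) (psi : formula (vaddc S)) :
  is_safety P ->
  fbound 1 phi ->
  soundness_inv P phi xi ->
  safe_inv (Pi_w P phi) psi ->
  safe_inv P (subst_m psi xi).
Proof.
move=> [init_closed [trans_closed bad_closed]] phi_bound
  [xi_closed xi_init xi_trans xi_safe] [psi_closed psi_init psi_trans psi_safe].
split.
- exact: fbound_subst_m.
- exact: entails_init_subst_m phi_bound psi_closed init_closed xi_init psi_init.
- exact: entails_trans_subst_m phi_bound psi_closed trans_closed xi_trans psi_trans.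
- exact: entails_safe_subst_m phi_bound psi_closed bad_closed xi_safe psi_safe.
Qed.
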